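(* Let $(P)$ be a property of C*-algebras. Assume: (1) the zero C*-algebra has $(P)$; (2) whenever $A$ is a separable C*-algebra and $I, J \subseteq A$ are ideals with $(P)$, then $I + J$ has $(P)$; (3) whenever $A$ is a separable C*-algebra and $I_0 \subseteq I_1 \subseteq \cdots \subseteq A$ is a sequence of ideals with $(P)$, then $\overline{\bigcup_{n=0}^\infty I_n}$ has $(P)$. Then $(P)$ separably admits largest ideals.
   Context: All ideals are closed two-sided. $(P)$ separably admits largest ideals if for every separable C*-algebra $A$ there is an ideal $I \subseteq A$ with $(P)$ such that every ideal $J \subseteq A$ with $(P)$ satisfies $J \subseteq I$. *)

From mathcomp Require Import all_boot all_order all_algebra.
From mathcomp Require Import all_classical all_reals all_analysis.
From mathcomp Require Import complex.
Import numFieldNormedType.Exports.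
Import Order.TTheory GRing.Theory Num.Theory.
Set Implicit Arguments. Unset Strict Implicit. Unset Printing Implicit Defensive.
Local Open Scope ring_scope.
Local Open Scope classical_set_scope.

(** A (not necessarily unital) complex C*-algebra: a complex Banach space with
    a bilinear associative multiplication, a conjugate-linear involutive
    anti-multiplicative involution, a submultiplicative norm and the
    C*-identity ||x^* x|| = ||x||^2. (Norms take values in R[i]; they are real.) *)
Record CstarAlg (R : realType) := {
  cs_car :> completeNormedModType R[i];
  cs_mul : cs_car -> cs_car -> cs_car;
  cs_star : cs_car -> cs_car;
  cs_mulDl : forall (a : R[i]) (x y z : cs_car),
      cs_mul (a *: x + y) z = a *: cs_mul x z + cs_mul y z;
  cs_mulDr : forall (a : R[i]) (x y z : cs_car),
      cs_mul z (a *: x + y) = a *: cs_mul z x + cs_mul z y;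
  cs_mulA : forall x y z : cs_car, cs_mul x (cs_mul y z) = cs_mul (cs_mul x y) z;
  cs_starD : forall (a : R[i]) (x y : cs_car),
      cs_star (a *: x + y) = a^* *: cs_star x + cs_star y;
  cs_starK : forall x : cs_car, cs_star (cs_star x) = x;
  cs_starM : forall x y : cs_car,
      cs_star (cs_mul x y) = cs_mul (cs_star y) (cs_star x);
  cs_normM : forall x y : cs_car, `|cs_mul x y| <= `|x| * `|y|;
  cs_cstar : forall x : cs_car, `|cs_mul (cs_star x) x| = `|x| ^+ 2
}.

Arguments cs_mul {R} c _ _.
Arguments cs_star {R} c _.

Definition separable (R : realType) (A : CstarAlg R) : Prop :=
  exists D : set A, countable D /\ closure D = setT.

Definition ideal (R : realType) (A : CstarAlg R) (I : set A) : Prop :=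
  [/\ I 0,
      (forall (a : R[i]) x y, I x -> I y -> I (a *: x + y)),
      (forall x y, I y -> I (cs_mul A x y) /\ I (cs_mul A y x))
    & closed I].

Definition ideal_sum (R : realType) (A : CstarAlg R) (I J : set A) : set A :=
  [set z | exists x y, I x /\ J y /\ z = x + y].

Definition is_zero_alg (R : realType) (B : CstarAlg R) : Prop :=
  forall x : B, x = 0.

Definition star_iso_onto (R : realType) (B A : CstarAlg R) (f : B -> A)
    (I : set A) : Prop :=
  [/\ (forall (a : R[i]) x y, f (a *: x + y) = a *: f x + f y),
      (forall x y, f (cs_mul B x y) = cs_mul A (f x) (f y)),
      (forall x, f (cs_star B x) = cs_star A (f x)),
      (forall x, `|f x| = `|x|)
    & range f = I].

(** The ideal I of A, regarded as a C*-algebra, has the property P: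
    I is *-isomorphic to some C*-algebra B with property P. *)
Definition ideal_hasP (R : realType) (P : CstarAlg R -> Prop) (A : CstarAlg R)
    (I : set A) : Prop :=
  exists (B : CstarAlg R) (f : B -> A), P B /\ star_iso_onto f I.

Definition separably_admits_largest_ideals (R : realType)
    (P : CstarAlg R -> Prop) : Prop :=
  forall A : CstarAlg R, separable A ->
    exists I : set A, [/\ ideal I, ideal_hasP P I &
      forall J : set A, ideal J -> ideal_hasP P J -> J `<=` I].

(* Enumerate a countable basis (U_n) of the separable algebra A and pick, for
   each n, an ideal J_n with (P) that meets U_n whenever some ideal with (P)
   does.  Every ideal with (P) then lies in the closure of the union of the J_n.
   The partial sums J_0 + ... + J_(n-1) form an increasing sequence of ideals
   with (P) exhausting that union, so the closure of their union is an ideal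
   with (P) containing all others. *)

From HB Require Import structures.
From mathcomp Require Import all_boot all_order all_algebra.
From mathcomp Require Import all_classical all_reals all_analysis.
From mathcomp Require Import complex.
Import numFieldNormedType.Exports.
Import Order.TTheory GRing.Theory Num.Theory.
Local Open Scope ring_scope.
Local Open Scope classical_set_scope.

Lemma closure_homo {T : topologicalType} {S : set T} {g : T -> T} :
  continuous g -> {homo g : x / S x} -> {homo g : x / closure S x}.
Proof.
move=> gC gS x Sx N /gC/Sx[u [Su Nu]].
by exists (g u); split => //; exact: gS.
Qed.

Lemma lipschitz_continuous (K : numFieldType) (V W : normedModType K)
    (g : V -> W) (c : K) : 0 <= c ->
  (forall x y, `|g x - g y| <= c * `|x - y|) -> continuous g.
Proof.
move=> c0 lip x; apply/cvgrPdist_lt => e e0.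
have c1 : 0 < c + 1 by rewrite ltr_wpDl.
near=> y; apply: (le_lt_trans (lip x y)).
apply: (@le_lt_trans _ _ ((c + 1) * `|x - y|)).
  by rewrite ler_wpM2r // lerDl.
rewrite -ltr_pdivlMl //; near: y.
by apply: (@cvgr_dist_lt _ _ _ _ _ id); rewrite // mulr_gt0 ?invr_gt0.
Unshelve. all: by end_near.
Qed.

Lemma isometry_range_closed (K : numFieldType) (V : completeNormedModType K)
    (W : normedModType K) (f : V -> W) :
  (forall x y, `|f x - f y| = `|x - y|) -> closed (range f).
Proof.
move=> fiso z zf.
(* The preimage under f of the neighbourhoods of z is a Cauchy filter on the
   complete space V; its limit is mapped to z. *)
pose G := filter_from (nbhs z) (preimage f).
have GF : Filter G.
  apply: filter_from_filter; first by exists setT; exact: filterT.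
  by move=> N M Nz Mz; exists (N `&` M); [exact: filterI|].
have GP : ProperFilter G.
  by apply: filter_from_proper => N /zf[_ [[x _ <-] Nfx]]; exists x.
have Gcauchy : cauchy G.
  apply/cauchy_ballP => e e0.
  exists (f @^-1` ball z (e / 2), f @^-1` ball z (e / 2)).
    by split; exists (ball z (e / 2)) => //; apply: nbhsx_ballx; rewrite divr_gt0.
  case=> x y [/= zx zy]; have := ball_splitr zx zy.
  by rewrite -!ball_normE /= fiso.
have /cvg_ex[x Gx] := @cauchy_cvg _ G GP Gcauchy.
exists x => //.
have fC : continuous f.
  by apply: (@lipschitz_continuous _ _ _ _ 1) => // u v; rewrite fiso mul1r.
have fGx : f @ G --> f x := cvg_trans (cvg_app f Gx) (fC x).
have fGz : f @ G --> z by move=> N Nz; exists N.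
exact: cvg_unique fGx fGz.
Qed.

Lemma countable_subfamily_closure {T : topologicalType} {Q : set T -> Prop} :
  @second_countable T -> (exists K, Q K) ->
  exists J : nat -> set T,
    (forall n, Q (J n)) /\ forall K, Q K -> K `<=` closure (\bigcup_n J n).
Proof.
move=> [B cB [_ baseB]] [K0 QK0].
have [g gB] : exists g : nat -> set T, set_surj setT B g by apply/pcard_surjP.
have /choice[J JP] : forall n, exists J, Q J /\
    ((exists2 K, Q K & K `&` g n !=set0) -> J `&` g n !=set0).
  move=> n; case: (pselect (exists2 K, Q K & K `&` g n !=set0)) => [[K QK Kg]|nK].
    by exists K.
  by exists K0; split => // /nK.
exists J; split=> [n|K QK x Kx N Nx]; first exact: (JP n).1.
have [U [BU Ux] UN] := baseB x N Nx.
have [n _ gnU] := gB U BU.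
have [|y [Jy gy]] := (JP n).2; first by exists K => //; exists x; rewrite gnU.
by exists y; split; [exists n | apply: UN; rewrite -gnU].
Qed.

Lemma complex_natSinv_lt (R : realType) (e : R[i]) :
  0 < e -> exists k : nat, k.+1%:R^-1 < e.
Proof.
case: e => a b; rewrite ltcE /= => /andP[/eqP -> a0].
have [k _ /(_ k (leqnn k)) ka] := near_infty_natSinv_lt (PosNum a0).
exists k; rewrite -(rmorph_nat (real_complex R)) -fmorphV.
by rewrite ltcR.
Qed.

Lemma separable_second_countable {R : realType} {V : normedModType R[i]} :
  (exists D : set V, countable D /\ closure D = setT) -> @second_countable V.
Proof.
move=> [D [cD Ddense]].
exists ((fun p => ball p.1 p.2.+1%:R^-1) @` (D `*` [set: nat])).
  exact: sub_countable (card_image_le _ _) (countableX cD (countableP _)).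
split=> [_ [[d k] _ <-]|x N /nbhs_ballP[r r0 xrN]]; first exact: ball_open.
have [k kr] := @complex_natSinv_lt R _ (divr_gt0 r0 (ltr0Sn _ 1)).
have /(_ (ball x k.+1%:R^-1))[|d [Dd xd]] : closure D x by rewrite Ddense.
  by apply: nbhsx_ballx; rewrite invr_gt0.
exists (ball d k.+1%:R^-1); first by split; [exists (d, k) | exact: ball_sym].
move=> y dy; apply/xrN/(le_ball _ (ball_triangle xd dy)).
by rewrite [leRHS]splitr lerD // ltW.
Qed.

Section ZeroAlgebra.
Variable R : realType.

Definition zero_space := 'M[R[i]]_(0, 0).
HB.instance Definition _ := NormedModule.on zero_space.

Lemma zero_space_eq0 (x : zero_space) : x = 0.
Proof. exact: flatmx0. Qed.

Lemma zero_space_complete (F : set_system zero_space) :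
  ProperFilter F -> cauchy F -> cvg F.
Proof.
move=> FF _; apply/cvg_ex; exists 0 => S /nbhs_singleton S0.
suff -> : S = setT by exact: filterT.
by rewrite predeqE => x; rewrite (zero_space_eq0 x).
Qed.
HB.instance Definition _ := Uniform_isComplete.Build zero_space zero_space_complete.

Definition zero_cstar_alg : CstarAlg R.
Proof.
refine (@Build_CstarAlg R zero_space (fun _ _ => 0) (fun _ => 0) _ _ _ _ _ _ _ _);
  do ?by move=> *; apply: etrans (zero_space_eq0 _) (esym (zero_space_eq0 _)).
- by move=> x y; rewrite (zero_space_eq0 x) normr0 mul0r.
- by move=> x; rewrite (zero_space_eq0 x) normr0 expr0n.
Defined.

Lemma zero_cstar_alg_is_zero : is_zero_alg zero_cstar_alg.
Proof. exact: zero_space_eq0. Qed.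

End ZeroAlgebra.

Arguments zero_space_eq0 {R}.

Section CstarAlgebra.
Context {R : realType} {A : CstarAlg R}.

Lemma cs_mulrDr (x y z : A) : cs_mul A x (y + z) = cs_mul A x y + cs_mul A x z.
Proof. by have := cs_mulDr 1 y z x; rewrite !scale1r. Qed.

Lemma cs_mulrDl (x y z : A) : cs_mul A (x + y) z = cs_mul A x z + cs_mul A y z.
Proof. by have := cs_mulDl 1 x y z; rewrite !scale1r. Qed.

Lemma cs_mulrBr (x y z : A) : cs_mul A x (y - z) = cs_mul A x y - cs_mul A x z.
Proof. by have := cs_mulDr (-1) z y x; rewrite !scaleN1r addrC [RHS]addrC. Qed.

Lemma cs_mulrBl (x y z : A) : cs_mul A (x - y) z = cs_mul A x z - cs_mul A y z.
Proof. by have := cs_mulDl (-1) y x z; rewrite !scaleN1r addrC [RHS]addrC. Qed.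

Lemma cs_mulr0 (x : A) : cs_mul A x 0 = 0.
Proof. by have := cs_mulrBr x x x; rewrite !subrr. Qed.

Lemma cs_mul0r (x : A) : cs_mul A 0 x = 0.
Proof. by have := cs_mulrBl x x x; rewrite !subrr. Qed.

Lemma cs_star0 : cs_star A 0 = 0.
Proof.
have := cs_starD (-1) (0 : A) 0.
by rewrite scaler0 addr0 rmorphN1 scaleN1r addNr.
Qed.

Lemma continuous_cs_mull (x : A) : continuous (cs_mul A x).
Proof.
apply: (@lipschitz_continuous _ _ _ _ `|x|) => // u v.
by rewrite -cs_mulrBr cs_normM.
Qed.

Lemma continuous_cs_mulr (x : A) : continuous (cs_mul A ^~ x).
Proof.
apply: (@lipschitz_continuous _ _ _ _ `|x|) => // u v.
by rewrite -cs_mulrBl mulrC cs_normM.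
Qed.

Definition absorbing (U : set A) :=
  forall x y, U y -> U (cs_mul A x y) /\ U (cs_mul A y x).

Lemma ideal_absorbing {I : set A} : ideal I -> absorbing I.
Proof. by case. Qed.

Lemma absorbing0 : absorbing [set 0].
Proof. by move=> x _ ->; rewrite cs_mulr0 cs_mul0r. Qed.

Lemma absorbing_ideal_sum {I J : set A} :
  absorbing I -> absorbing J -> absorbing (ideal_sum I J).
Proof.
move=> Iabs Jabs x _ [y [z [Iy [Jz ->]]]]; split.
  exists (cs_mul A x y), (cs_mul A x z).
  by rewrite cs_mulrDr; split; [case: (Iabs x y) | split; first case: (Jabs x z)].
exists (cs_mul A y x), (cs_mul A z x).
by rewrite cs_mulrDl; split; [case: (Iabs x y) | split; first case: (Jabs x z)].
Qed.

Lemma absorbing_bigcup {I : Type} {U : I -> set A} :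
  (forall i, absorbing (U i)) -> absorbing (\bigcup_i U i).
Proof.
move=> Uabs x y [i _ Uy].
by have [] := Uabs i x y Uy; split; exists i.
Qed.

Lemma absorbing_closure {U : set A} : absorbing U -> absorbing (closure U).
Proof.
move=> Uabs x y Uy; split.
  by apply: (closure_homo (continuous_cs_mull x) _ _ Uy) => u /(Uabs x)[].
by apply: (closure_homo (continuous_cs_mulr x) _ _ Uy) => u /(Uabs x)[].
Qed.

Lemma subset_ideal_suml {I J : set A} : J 0 -> I `<=` ideal_sum I J.
Proof. by move=> J0 x Ix; exists x, 0; rewrite addr0. Qed.

Lemma subset_ideal_sumr {I J : set A} : I 0 -> J `<=` ideal_sum I J.
Proof. by move=> I0 y Jy; exists 0, y; rewrite add0r. Qed.

Context {P : CstarAlg R -> Prop}.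

Lemma ideal_hasP_zero :
  (forall B, is_zero_alg B -> P B) -> ideal_hasP P [set 0 : A].
Proof.
move=> P0; exists (zero_cstar_alg R), (fun => 0).
split; first exact/P0/zero_cstar_alg_is_zero.
split=> [a x y|x y|x|x|]; rewrite ?scaler0 ?addr0 ?cs_mul0r ?cs_star0 //.
- by rewrite (zero_space_eq0 x) !normr0.
- by rewrite predeqE => y; split=> [[]|->] //; exists 0.
Qed.

Lemma hasP_ideal {I : set A} : ideal_hasP P I -> absorbing I -> ideal I.
Proof.
move=> [B [f [_ [flin _ _ fnorm <-]]]] Iabs.
have fB x y : f (x - y) = f x - f y.
  by have := flin (-1) y x; rewrite !scaleN1r addrC [RHS]addrC.
split=> //.
- by exists 0 => //; have := fB 0 0; rewrite !subrr.
- by move=> a _ _ [x _ <-] [y _ <-]; exists (a *: x + y).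
- by apply: isometry_range_closed => x y; rewrite -fB fnorm.
Qed.

End CstarAlgebra.

Theorem lemma1p6 (R : realType) (P : CstarAlg R -> Prop)
  (h0 : forall B : CstarAlg R, is_zero_alg B -> P B)
  (hsum : forall A : CstarAlg R, separable A ->
     forall I J : set A, ideal I -> ideal J -> ideal_hasP P I -> ideal_hasP P J ->
       ideal_hasP P (ideal_sum I J))
  (hunion : forall A : CstarAlg R, separable A ->
     forall In : nat -> set A, (forall n, ideal (In n)) ->
       (forall n, In n `<=` In n.+1) -> (forall n, ideal_hasP P (In n)) ->
       ideal_hasP P (closure (\bigcup_n In n))) :
  separably_admits_largest_ideals P.
Proof.
move=> A sepA; pose Q (J : set A) := ideal J /\ ideal_hasP P J.
have Q0 : Q [set 0].
  by split; [apply: hasP_ideal (ideal_hasP_zero h0) absorbing0 | exact: ideal_hasP_zero].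
have QD I J : Q I -> Q J -> Q (ideal_sum I J).
  move=> [iI PI] [iJ PJ]; have PIJ := hsum A sepA I J iI iJ PI PJ; split=> //.
  exact: hasP_ideal PIJ (absorbing_ideal_sum (ideal_absorbing iI) (ideal_absorbing iJ)).
have [J [QJ QJ_sub]] := countable_subfamily_closure
  (separable_second_countable sepA) (ex_intro _ _ Q0).
pose In := fix In n := if n is m.+1 then ideal_sum (In m) (J m) else [set 0 : A].
have QIn n : Q (In n) by elim: n => //= n /QD; apply.
have In0 n : In n 0 by case: (QIn n) => -[].
have InS n : In n `<=` In n.+1.
  by apply: subset_ideal_suml; case: (QJ n) => -[].
have PI := hunion A sepA In (fun n => (QIn n).1) InS (fun n => (QIn n).2).
exists (closure (\bigcup_n In n)); split=> //.
  apply: hasP_ideal PI _; apply/absorbing_closure/absorbing_bigcup => n.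
  exact: ideal_absorbing (QIn n).1.
move=> K iK PK; apply: subset_trans (QJ_sub K (conj iK PK)) _.
apply: closureS => x [n _ Jx]; exists n.+1 => //.
exact: subset_ideal_sumr (In0 n) _ Jx.
Qed.
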